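(* Let $\mathsf{Prop}=\{p,\bar p\}$ and let $\mathsf{L}'$ be a monotone fragment of $\mathsf{LTL}(\mathsf{Prop})$ with $\mathbf{X}\in\mathsf{Op}'$ and $\mathbf{U}\notin\mathsf{Op}'$ (and containing at least one proposition). For every $n\in\mathbb{N}$ there is a sample $\mathcal{S}=(\mathcal{P},\mathcal{N})$ of words in $\mathcal{W}(\mathsf{Prop})$, each $w\in\mathcal{S}$ written as $w=u_w\cdot v_w^\omega$, such that $k:=\sum_{w\in\mathcal{S}}(|u_w|+|v_w|)\ge n$ and the minimal size of an $\mathcal{S}$-separating $\mathsf{L}'$-formula is larger than $2^{\sqrt{k}}$.
   Context: $\mathsf{LTL}(\mathsf{Prop})$ has operators: each proposition $q\in\mathsf{Prop}$ (arity 0), $\neg,\mathbf{X},\mathbf{F},\mathbf{G}$ (arity 1), $\vee,\wedge,\mathbf{U}$ (arity 2). A fragment is given by a subset $\mathsf{Op}'$ of these operators, its formulas being those built only from operators in $\mathsf{Op}'$. A fragment is monotone if $\neg\notin\mathsf{Op}'$ and at most one of $\vee,\wedge$ is in $\mathsf{Op}'$. $\mathsf{sz}(\varphi)$ is the number of distinct subformulas of $\varphi$. $\mathcal{W}(\mathsf{Prop})=\{u\cdot v^\omega: u,v\in(2^{\mathsf{Prop}})^*,\ u\cdot v\ne\varepsilon\}$, where for $v=\varepsilon$ the word is the finite word $u$. For a word $w$, $|w|\in\mathbb{N}\cup\{\infty\}$ is its length and $w[j:]$ its suffix from position $j$. Semantics: $w\models q$ iff $q\in w[0]$; Boolean connectives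 as usual; $w\models\mathbf{X}\varphi$ iff $|w|\ge2$ and $w[1:]\models\varphi$; $w\models\mathbf{F}\varphi$ iff $\exists j<|w|$, $w[j:]\models\varphi$; $w\models\mathbf{G}\varphi$ iff $\forall j<|w|$, $w[j:]\models\varphi$; $w\models\varphi_1\mathbf{U}\varphi_2$ iff $\exists j<|w|$ with $w[j:]\models\varphi_2$ and $w[k:]\models\varphi_1$ for all $k<j$. A formula is $\mathcal{S}$-separating if it is satisfied by every word of $\mathcal{P}$ and by no word of $\mathcal{N}$. *)

From Stdlib Require Import Reals List Arith.
Import ListNotations.

Inductive prop : Type := p | pbar.

(* A letter is an element of 2^Prop, given by its characteristic function. *)
Definition letter : Type := prop -> bool.

Inductive ltl : Type :=
  | Atom  : prop -> ltl
  | Not   : ltl -> ltl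
  | Next  : ltl -> ltl
  | Fin   : ltl -> ltl
  | Glob  : ltl -> ltl
  | Or    : ltl -> ltl -> ltl
  | And   : ltl -> ltl -> ltl
  | Until : ltl -> ltl -> ltl.

Scheme Equality for prop.
Scheme Equality for ltl.

Inductive op : Type :=
  | OAtom : prop -> op | ONot | OX | OF | OG | OOr | OAnd | OU.

Fixpoint in_frag (O : op -> Prop) (f : ltl) : Prop :=
  match f with
  | Atom q => O (OAtom q)
  | Not g => O ONot /\ in_frag O g
  | Next g => O OX /\ in_frag O g
  | Fin g => O OF /\ in_frag O g
  | Glob g => O OG /\ in_frag O g
  | Or g h => O OOr /\ in_frag O g /\ in_frag O h
  | And g h => O OAnd /\ in_frag O g /\ in_frag O h
  | Until g h => O OU /\ in_frag O g /\ in_frag O h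
  end.

Definition monotone (O : op -> Prop) : Prop :=
  ~ O ONot /\ ~ (O OOr /\ O OAnd).

Fixpoint subf (f : ltl) : list ltl :=
  f :: match f with
       | Atom _ => []
       | Not g | Next g | Fin g | Glob g => subf g
       | Or g h | And g h | Until g h => subf g ++ subf h
       end.

Definition sz (f : ltl) : nat := length (nodup ltl_eq_dec (subf f)).

(* A word u . v^omega given by the pair (u, v); v = [] means the finite word u. *)
Definition lasso : Type := (list letter * list letter)%type.

Definition valid_lasso (w : lasso) : Prop := fst w ++ snd w <> [].

Definition lt_len (w : lasso) (j : nat) : Prop :=
  match snd w with
  | [] => j < length (fst w)
  | _ :: _ => True
  end.

Definition letter_at (w : lasso) (j : nat) : letter :=
  let (u, v) := w in
  if j <? length u then nth j u (fun _ => false)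
  else nth ((j - length u) mod length v) v (fun _ => false).

Fixpoint sat (w : lasso) (j : nat) (f : ltl) : Prop :=
  match f with
  | Atom q => letter_at w j q = true
  | Not g => ~ sat w j g
  | Next g => lt_len w (S j) /\ sat w (S j) g
  | Fin g => exists i, j <= i /\ lt_len w i /\ sat w i g
  | Glob g => forall i, j <= i -> lt_len w i -> sat w i g
  | Or g h => sat w j g \/ sat w j h
  | And g h => sat w j g /\ sat w j h
  | Until g h => exists i, j <= i /\ lt_len w i /\ sat w i h /\
                   forall k, j <= k -> k < i -> sat w k g
  end.

Definition models (w : lasso) (f : ltl) : Prop := sat w 0 f.

Definition word_eq (w1 w2 : lasso) : Prop :=
  (forall i, lt_len w1 i <-> lt_len w2 i) /\
  (forall i q, lt_len w1 i -> letter_at w1 i q = letter_at w2 i q).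

Fixpoint distinct_words (l : list lasso) : Prop :=
  match l with
  | [] => True
  | w :: l' => Forall (fun w' => ~ word_eq w w') l' /\ distinct_words l'
  end.

Definition separates (P N : list lasso) (f : ltl) : Prop :=
  Forall (fun w => models w f) P /\ Forall (fun w => ~ models w f) N.

Definition sample_size (S : list lasso) : nat :=
  fold_right (fun w acc => length (fst w) + length (snd w) + acc) 0 S.

From Stdlib Require Import Reals List Arith.
From Stdlib Require Import Lia Lra Classical.
Import ListNotations.

(* The sample consists of the periodic words (0^(q-1) 1)^w, 2 <= q <= 2M, against (10)^w, with
   p and p-bar always carrying the same bit; it has size about 2M^2, and X^((2M)! - 1) p
   separates it.  Now let f be built from atoms, X, F, G and /\ and hold on every (0^(q-1) 1)^w.
   Evaluate f on all words at once, keeping the invariant "during the next h steps, (10)^w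
   reads 1 whenever all the other words do".  Initially the other words all read 1 only at
   positions t with t + 1 a common multiple of 2, ..., 2M, so t + 1 >= C(2M, M) and the
   invariant holds for h < C(2M, M).  It survives X and /\, and it survives F and G because
   both (01)^w and (10)^w have period 2: at an F the word (10)^w chooses a position of parity
   opposite to the witness in (01)^w, at a G the word (01)^w does.  Hence a formula of height
   below C(2M, M) >= 4^M / (2M + 1) cannot separate the sample.  With \/ instead of /\,
   complement every word and dualise the formula. *)

Module CentralBinomial.
Set Warnings "-notation-overridden -require-in-module".
From mathcomp Require Import ssreflect ssrbool ssrfun eqtype ssrnat div prime binomial bigop.
From mathcomp Require Import zify.

Lemma sum_indicator_leq n T : \sum_(1 <= k < n.+1) (k <= T) = minn n T.
Proof.
elim: n => [|n IH]; first by rewrite big_geq // min0n.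
by rewrite big_nat_recr //= IH; case: (leqP n.+1 T) => /=; lia.
Qed.

Lemma logn_fact_upto N p a : prime p -> a <= N ->
  logn p a`! = \sum_(1 <= k < N.+1) a %/ p ^ k.
Proof.
move=> pr aN; rewrite logn_fact // [RHS](@big_cat_nat _ _ _ a.+1) //=.
rewrite [X in _ = _ + X]big1_seq ?addn0 // => k /andP[_]; rewrite mem_index_iota => /andP[ak _].
by apply: divn_small; apply: ltn_trans ak (ltn_expl k (prime_gt1 pr)).
Qed.

(* Legendre: [logn p 'C(N, K)] counts the carries [N %/ p ^ k - K %/ p ^ k - (N - K) %/ p ^ k],
   each at most 1 and zero once [p ^ k > N]. *)
Lemma logn_bin_leq p N K : prime p -> K <= N -> logn p 'C(N, K) <= trunc_log p N.
Proof.
move=> pr KN; have p_gt1 := prime_gt1 pr.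
have lognN : logn p N`! = logn p 'C(N, K) + logn p K`! + logn p (N - K)`!.
  by rewrite -(bin_fact KN) !lognM ?bin_gt0 ?muln_gt0 ?fact_gt0 //; lia.
rewrite !(logn_fact_upto N _ _ pr) ?leq_subr // in lognN.
suff carries : \sum_(1 <= k < N.+1) N %/ p ^ k <=
   \sum_(1 <= k < N.+1) (K %/ p ^ k + (N - K) %/ p ^ k + (k <= trunc_log p N)).
  by rewrite !big_split /= sum_indicator_leq in carries; lia.
apply: leq_sum => k _; have pk_gt0 : 0 < p ^ k by rewrite expn_gt0; lia.
case: (leqP (p ^ k) N) => pkN; last by rewrite divn_small.
rewrite trunc_log_max // -{1}(subnKC KN) divnD //.
by have := leq_b1 (p ^ k <= K %% p ^ k + (N - K) %% p ^ k); lia.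
Qed.

Lemma bin_dvd_common_multiple N K x : K <= N -> 0 < x ->
  (forall q, 0 < q <= N -> q %| x) -> 'C(N, K) %| x.
Proof.
move=> KN x_gt0 dvd_x; apply/dvdn_partP => [|p]; first by rewrite bin_gt0.
rewrite mem_primes => /and3P[pr _ _]; rewrite p_part.
apply: dvdn_trans (dvdn_exp2l p (logn_bin_leq _ _ _ pr KN)) _.
case: (posnP N) => [->|N_gt0]; first by rewrite trunc_log0 dvd1n.
by apply: dvd_x; rewrite expn_gt0 prime_gt0 // trunc_logP ?prime_gt1.
Qed.

Lemma exp4_leq_central_bin M : 4 ^ M <= (2 * M + 1) * 'C(2 * M, M).
Proof.
elim: M => [|m IH]; first by rewrite bin0.
have e1 := mul_bin_diag (2 * m).+1 m; have e2 := mul_bin_diag (2 * m.+1) m.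
have sym : 'C((2 * m).+1, m.+1) = 'C((2 * m).+1, m).
  by rewrite -bin_sub; [congr binomial; lia | lia].
have pred2 : (2 * m.+1).-1 = (2 * m).+1 by lia.
rewrite pred2 in e2; rewrite /= sym in e1; rewrite expnS; nia.
Qed.

Definition central_binomial (M : nat) : nat := 'C(2 * M, M).

Lemma central_binomial_le_common_multiple M x : (0 < x)%coq_nat ->
  (forall q, (2 <= q)%coq_nat -> (q <= 2 * M)%coq_nat -> Nat.divide q x) ->
  (central_binomial M <= x)%coq_nat.
Proof.
move=> /ltP x_gt0 dvd_x; apply/leP; apply: dvdn_leq => //.
apply: bin_dvd_common_multiple => //; first lia.
move=> q /andP[q_gt0 qM]; case: (ltnP 1 q) => [q_gt1 | q_le1].
  have [c ->] : Nat.divide q x by apply: dvd_x; lia.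
  exact: dvdn_mull.
by have -> : q = 1 by lia.
Qed.

Lemma pow4_le_central_binomial M : (Nat.pow 4 M <= (2 * M + 1) * central_binomial M)%coq_nat.
Proof.
have -> : Nat.pow 4 M = 4 ^ M by elim: M => //= m IH; rewrite expnS -IH.
by apply/leP; apply: exp4_leq_central_bin.
Qed.
End CentralBinomial.

(* In all the words below both propositions carry the same bit, so formulas are evaluated on
   an infinite bit stream. *)
Fixpoint holds (s : nat -> bool) (j : nat) (f : ltl) : Prop :=
  match f with
  | Atom _ => s j = true
  | Not g => ~ holds s j g
  | Next g => holds s (S j) g
  | Fin g => exists i, j <= i /\ holds s i g
  | Glob g => forall i, j <= i -> holds s i g
  | Or g h => holds s j g \/ holds s j h
  | And g h => holds s j g /\ holds s j h
  | Until g h => exists i, j <= i /\ holds s i h /\ forall k, j <= k -> k < i -> holds s k g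
  end.

Definition periodic (n : nat) (s : nat -> bool) : lasso :=
  ([], map (fun i (_ : prop) => s i) (seq 0 n)).

Lemma letter_at_periodic n s j a : 0 < n -> letter_at (periodic n s) j a = s (j mod n).
Proof.
  intros Hn. assert (Hj : j mod n < n) by (apply Nat.mod_upper_bound; lia).
  unfold letter_at, periodic; simpl. rewrite Nat.sub_0_r, length_map, length_seq.
  rewrite (nth_indep _ _ ((fun i (_ : prop) => s i) 0)) by (rewrite length_map, length_seq; exact Hj).
  rewrite (map_nth (fun i (_ : prop) => s i) (seq 0 n) 0), seq_nth by exact Hj. reflexivity.
Qed.

Lemma lt_len_periodic n s j : 0 < n -> lt_len (periodic n s) j.
Proof. intros Hn. destruct n; [lia | exact I]. Qed.

Lemma valid_periodic n s : 0 < n -> valid_lasso (periodic n s).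
Proof. intros Hn. destruct n; [lia | discriminate]. Qed.

Lemma sat_periodic n s f : 0 < n ->
  forall j, sat (periodic n s) j f <-> holds (fun i => s (i mod n)) j f.
Proof.
  intros Hn. pose proof (lt_len_periodic n s) as Hlen.
  induction f; intros j; cbn [sat holds].
  - rewrite letter_at_periodic by exact Hn. reflexivity.
  - rewrite IHf. reflexivity.
  - rewrite IHf. firstorder.
  - setoid_rewrite IHf. firstorder.
  - setoid_rewrite IHf. firstorder.
  - rewrite IHf1, IHf2. reflexivity.
  - rewrite IHf1, IHf2. reflexivity.
  - setoid_rewrite IHf1. setoid_rewrite IHf2. firstorder.
Qed.

(* [U] has no dual in the language: its image is arbitrary, and [holds_dual] excludes it. *)
Fixpoint dual (f : ltl) : ltl :=
  match f with
  | Atom a => Atom a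
  | Not g => Not (dual g)
  | Next g => Next (dual g)
  | Fin g => Glob (dual g)
  | Glob g => Fin (dual g)
  | Or g h => And (dual g) (dual h)
  | And g h => Or (dual g) (dual h)
  | Until g h => Until (dual g) (dual h)
  end.

Definition dual_op (o : op) : op :=
  match o with
  | OF => OG
  | OG => OF
  | OOr => OAnd
  | OAnd => OOr
  | o => o
  end.

Lemma in_frag_dual O f : in_frag O f -> in_frag (fun o => O (dual_op o)) (dual f).
Proof. induction f; simpl; tauto. Qed.

Lemma holds_dual O s s' f : (forall i, s' i = negb (s i)) -> ~ O OU -> in_frag O f ->
  forall j, holds s' j f <-> ~ holds s j (dual f).
Proof.
  intros Hs' HU. induction f; cbn [in_frag holds dual]; intros Hf j.
  - rewrite Hs'. destruct (s j); intuition discriminate.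
  - rewrite IHf by tauto. reflexivity.
  - apply IHf. tauto.
  - setoid_rewrite IHf; [|tauto]. split.
    + intros [i [Hi Hn]] H. exact (Hn (H i Hi)).
    + intros H. apply NNPP. intros Hno. apply H. intros i Hi.
      apply NNPP. intros Hn. apply Hno. exists i. tauto.
  - setoid_rewrite IHf; [|tauto]. firstorder.
  - rewrite IHf1, IHf2 by tauto. destruct (classic (holds s j (dual f1))); tauto.
  - rewrite IHf1, IHf2 by tauto. tauto.
  - tauto.
Qed.

Fixpoint ht (f : ltl) : nat :=
  match f with
  | Atom _ => 1
  | Not g | Next g | Fin g | Glob g => S (ht g)
  | Or g h | And g h | Until g h => S (Nat.max (ht g) (ht h))
  end.

Lemma ht_dual f : ht (dual f) = ht f.
Proof. induction f; simpl; congruence. Qed.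

Lemma subformula_of_height f h : 1 <= h <= ht f -> exists g, In g (subf f) /\ ht g = h.
Proof.
  revert h. induction f; intros h Hh; simpl in Hh |- *;
    match goal with |- exists g, (?F = g \/ _) /\ _ =>
      destruct (Nat.eq_dec h (ht F)) as [->|Hne]; [exists F; auto|]; simpl in Hne
    end.
  1: lia.
  all: try (destruct (IHf h) as [g [Hg Hgh]]; [lia | exists g; auto]).
  all: destruct (Nat.le_gt_cases h (ht f1)).
  all: try (destruct (IHf1 h) as [g [Hg Hgh]]; [lia | exists g; split; [right; apply in_or_app|]; auto]).
  all: destruct (IHf2 h) as [g [Hg Hgh]]; [lia | exists g; split; [right; apply in_or_app|]; auto].
Qed.

Lemma ht_le_sz f : ht f <= sz f.
Proof.
  unfold sz. rewrite <- (length_seq (ht f) 1) at 1.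
  rewrite <- (length_map ht (nodup ltl_eq_dec (subf f))).
  apply NoDup_incl_length; [apply seq_NoDup|].
  intros h Hh. apply in_seq in Hh.
  destruct (subformula_of_height f h) as [g [Hg Hgh]]; [lia|].
  apply in_map_iff. exists g. split; [exact Hgh | apply nodup_In; exact Hg].
Qed.

Definition tick (q j : nat) : bool := j mod q =? q - 1.

Lemma tick_spec q j : 0 < q -> tick q j = true <-> Nat.divide q (S j).
Proof.
  intros Hq. unfold tick. rewrite Nat.eqb_eq.
  pose proof (Nat.div_mod_eq j q) as Hdiv.
  pose proof (Nat.mod_upper_bound j q ltac:(lia)) as Hmod.
  split.
  - intros Hj. exists (j / q + 1). nia.
  - intros [c Hc]. destruct c as [|c]; [lia|].
    symmetry. apply (Nat.mod_unique j q c); lia.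
Qed.

Lemma tick_two_shift a b : tick 2 (a + 1 + 2 * b) = negb (tick 2 a).
Proof.
  unfold tick. replace (a + 1 + 2 * b) with (S a + b * 2) by lia.
  rewrite Nat.Div0.mod_add.
  destruct (Nat.Even_or_Odd a) as [[c ->]|[c ->]].
  - rewrite <- (Nat.mod_unique (S (2 * c)) 2 c 1), <- (Nat.mod_unique (2 * c) 2 c 0) by lia.
    reflexivity.
  - rewrite <- (Nat.mod_unique (S (2 * c + 1)) 2 (S c) 0), <- (Nat.mod_unique (2 * c + 1) 2 c 1) by lia.
    reflexivity.
Qed.

Lemma divide_fact q N : 1 <= q <= N -> Nat.divide q (fact N).
Proof.
  induction N as [|N IH]; intros Hq; [lia|].
  destruct (Nat.eq_dec q (S N)) as [->|Hne].
  - apply Nat.divide_factor_l.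
  - simpl. apply Nat.divide_add_r; [|apply Nat.divide_mul_r]; apply IH; lia.
Qed.

Lemma tick_fact_pred q N : 1 <= q <= N -> tick q (fact N - 1) = true.
Proof.
  intros Hq. apply tick_spec; [lia|].
  pose proof (lt_O_fact N). replace (S (fact N - 1)) with (fact N) by lia.
  apply divide_fact. exact Hq.
Qed.

(* Reading each [tick q] from position [x q] and the complement of [tick 2] from position [y],
   during the next [h] steps the latter reads 1 whenever all the former do. *)
Definition aligned (qs : list nat) (h : nat) (x : nat -> nat) (y : nat) : Prop :=
  forall t, t < h -> (forall q, In q qs -> tick q (x q + t) = true) -> tick 2 (y + t) = false.

Lemma aligned_next qs h x y : aligned qs h x y -> aligned qs (h - 1) (fun q => S (x q)) (S y).
Proof.
  intros Hal t Ht Hticks. replace (S y + t) with (y + S t) by lia.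
  apply Hal; [lia|]. intros q Hq. replace (x q + S t) with (S (x q) + t) by lia. auto.
Qed.

Lemma aligned_fin qs h z y : In 2 qs -> aligned qs h z (z 2 + 1 + 2 * y).
Proof.
  intros H2 t _ Hticks. replace (z 2 + 1 + 2 * y + t) with (z 2 + t + 1 + 2 * y) by lia.
  rewrite tick_two_shift, (Hticks 2 H2). reflexivity.
Qed.

Lemma aligned_glob qs h x z : In 2 qs ->
  aligned qs h (fun q => if q =? 2 then z + 1 + 2 * x 2 else x q) z.
Proof.
  intros H2 t _ Hticks. specialize (Hticks 2 H2). rewrite Nat.eqb_refl in Hticks.
  replace (z + 1 + 2 * x 2 + t) with (z + t + 1 + 2 * x 2) in Hticks by lia.
  rewrite tick_two_shift in Hticks. destruct (tick 2 (z + t)); easy.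
Qed.

Lemma list_choice (l : list nat) (R : nat -> nat -> Prop) :
  (forall q, In q l -> exists i, R q i) -> exists z, forall q, In q l -> R q (z q).
Proof.
  induction l as [|a l IH]; intros H.
  - exists (fun _ => 0). intros q [].
  - destruct (H a (or_introl eq_refl)) as [ia Ha].
    destruct IH as [z Hz]; [intros q Hq; apply H; right; exact Hq|].
    exists (fun q => if q =? a then ia else z q). intros q [<-|Hq].
    + rewrite Nat.eqb_refl. exact Ha.
    + destruct (Nat.eqb_spec q a) as [->|_]; auto.
Qed.

Lemma holds_transfer qs O : In 2 qs -> ~ O OOr -> ~ O ONot -> ~ O OU ->
  forall f, in_frag O f -> forall h x y, ht f <= h -> aligned qs h x y ->
  (forall q, In q qs -> holds (tick q) (x q) f) -> holds (fun j => negb (tick 2 j)) y f.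
Proof.
  intros H2 HOr HNot HU.
  induction f; cbn [in_frag holds ht]; intros Hf h x y Hh Hal Hqs; try tauto.
  - rewrite <- (Nat.add_0_r y), (Hal 0); [reflexivity | lia |].
    intros q Hq. rewrite Nat.add_0_r. exact (Hqs q Hq).
  - apply (IHf (proj2 Hf) (h - 1) (fun q => S (x q))); [lia | apply aligned_next; exact Hal | exact Hqs].
  - destruct (list_choice qs _ Hqs) as [z Hz].
    exists (z 2 + 1 + 2 * y). split; [lia|].
    apply (IHf (proj2 Hf) (h - 1) z); [lia | apply aligned_fin; exact H2 |].
    intros q Hq. apply Hz. exact Hq.
  - intros i Hi.
    apply (IHf (proj2 Hf) (h - 1) (fun q => if q =? 2 then i + 1 + 2 * x 2 else x q));
      [lia | apply aligned_glob; exact H2 |].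
    intros q Hq. destruct (Nat.eqb_spec q 2) as [->|_]; apply Hqs; auto; lia.
  - split; [apply (IHf1 (proj1 (proj2 Hf)) h x y) | apply (IHf2 (proj2 (proj2 Hf)) h x y)];
      solve [lia | exact Hal | intros q Hq; apply Hqs; exact Hq].
Qed.

Definition moduli (M : nat) : list nat := seq 2 (2 * M - 1).

Lemma in_moduli M q : 1 <= M -> In q (moduli M) <-> 2 <= q <= 2 * M.
Proof. intros HM. unfold moduli. rewrite in_seq. lia. Qed.

Lemma aligned_below_central_binomial M h : 1 <= M ->
  h < CentralBinomial.central_binomial M -> aligned (moduli M) h (fun _ => 0) 0.
Proof.
  intros HM Hh t Ht Hticks. exfalso.
  enough (CentralBinomial.central_binomial M <= S t) by lia.
  apply CentralBinomial.central_binomial_le_common_multiple; [lia|].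
  intros q Hq2 HqM. apply tick_spec; [lia|]. apply (Hticks q), in_moduli; lia.
Qed.

Lemma central_binomial_le_ht O M f : 1 <= M -> ~ O OOr -> ~ O ONot -> ~ O OU -> in_frag O f ->
  (forall q, In q (moduli M) -> holds (tick q) 0 f) -> ~ holds (fun j => negb (tick 2 j)) 0 f ->
  CentralBinomial.central_binomial M <= ht f.
Proof.
  intros HM HOr HNot HU Hf Hpos Hneg.
  destruct (Nat.le_gt_cases (CentralBinomial.central_binomial M) (ht f)) as [|Hlt]; [assumption|].
  exfalso. apply Hneg.
  apply (holds_transfer (moduli M) O) with (h := ht f) (x := fun _ => 0); auto.
  - apply in_moduli; lia.
  - apply aligned_below_central_binomial; lia.
Qed.

Definition tick_word (q : nat) : lasso := periodic q (fun i => i =? q - 1).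
Definition cotick_word (q : nat) : lasso := periodic q (fun i => negb (i =? q - 1)).

Lemma models_tick_word q f : 0 < q -> models (tick_word q) f <-> holds (tick q) 0 f.
Proof. intros Hq. exact (sat_periodic q _ f Hq 0). Qed.

Lemma models_cotick_word q f : 0 < q ->
  models (cotick_word q) f <-> holds (fun j => negb (tick q j)) 0 f.
Proof. intros Hq. exact (sat_periodic q _ f Hq 0). Qed.

Fixpoint nexts (n : nat) (g : ltl) : ltl :=
  match n with 0 => g | S m => Next (nexts m g) end.

Lemma holds_nexts s n g j : holds s j (nexts n g) <-> holds s (n + j) g.
Proof.
  revert j. induction n as [|n IH]; intros j; simpl; [reflexivity|].
  rewrite IH, Nat.add_succ_r. reflexivity.
Qed.

Lemma in_frag_nexts O n g : O OX -> in_frag O g -> in_frag O (nexts n g).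
Proof. intros HX Hg. induction n; simpl; auto. Qed.

Definition separator (M : nat) (a : prop) : ltl := nexts (fact (2 * M) - 1) (Atom a).

Lemma holds_separator s M a : holds s 0 (separator M a) <-> s (fact (2 * M) - 1) = true.
Proof. unfold separator. rewrite holds_nexts, Nat.add_0_r. reflexivity. Qed.

Lemma periodic_word_eq n m s s' i : 0 < n -> 0 < m ->
  word_eq (periodic n s) (periodic m s') -> s (i mod n) = s' (i mod m).
Proof.
  intros Hn Hm [_ Heq].
  rewrite <- (letter_at_periodic n s i p), <- (letter_at_periodic m s' i p) by assumption.
  apply Heq, lt_len_periodic, Hn.
Qed.

Lemma tick_pred q : 0 < q -> tick q (q - 1) = true.
Proof. intros Hq. unfold tick. rewrite Nat.mod_small by lia. apply Nat.eqb_refl. Qed.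

Lemma tick_small q i : i < q - 1 -> tick q i = false.
Proof. intros Hi. unfold tick. rewrite Nat.mod_small by lia. apply Nat.eqb_neq. lia. Qed.

Lemma tick_word_neq a b : 2 <= a < b -> ~ word_eq (tick_word a) (tick_word b).
Proof.
  intros Hab E. apply (periodic_word_eq _ _ _ _ (a - 1)) in E; [|lia|lia].
  change (tick a (a - 1) = tick b (a - 1)) in E.
  rewrite tick_pred, tick_small in E by lia. discriminate.
Qed.

Lemma cotick_word_neq a b : 2 <= a < b -> ~ word_eq (cotick_word a) (cotick_word b).
Proof.
  intros Hab E. apply (periodic_word_eq _ _ _ _ (a - 1)) in E; [|lia|lia].
  change (negb (tick a (a - 1)) = negb (tick b (a - 1))) in E.
  rewrite tick_pred, tick_small in E by lia. discriminate.
Qed.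

Lemma tick_cotick_word_neq a b : 2 <= a -> 2 <= b -> ~ word_eq (tick_word a) (cotick_word b).
Proof.
  intros Ha Hb E. apply (periodic_word_eq _ _ _ _ 0) in E; [|lia|lia].
  change (tick a 0 = negb (tick b 0)) in E.
  rewrite !tick_small in E by lia. discriminate.
Qed.

Lemma distinct_words_app l1 l2 : distinct_words l1 -> distinct_words l2 ->
  (forall w1 w2, In w1 l1 -> In w2 l2 -> ~ word_eq w1 w2) -> distinct_words (l1 ++ l2).
Proof.
  induction l1 as [|w l1 IH]; simpl; intros H1 H2 Hcross; [exact H2|].
  destruct H1 as [Hw Hl1]. split.
  - apply Forall_app. split; [exact Hw|].
    apply Forall_forall. intros v Hv. apply Hcross; auto.
  - apply IH; auto.
Qed.

Lemma distinct_words_map_seq (w : nat -> lasso) a k :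
  (forall i j, a <= i -> i < j -> ~ word_eq (w i) (w j)) -> distinct_words (map w (seq a k)).
Proof.
  revert a. induction k as [|k IH]; intros a Hw; simpl; [exact I|]. split.
  - apply Forall_forall. intros v Hv. apply in_map_iff in Hv.
    destruct Hv as [j [<- Hj]]. apply in_seq in Hj. apply Hw; lia.
  - apply IH. intros i j Hi. apply Hw. lia.
Qed.

Lemma sample_size_app l1 l2 : sample_size (l1 ++ l2) = sample_size l1 + sample_size l2.
Proof. induction l1 as [|w l1 IH]; simpl; [reflexivity|]. rewrite IH. lia. Qed.

Lemma sample_size_map_periodic (s : nat -> nat -> bool) l :
  sample_size (map (fun q => periodic q (s q)) l) = list_sum l.
Proof. induction l as [|q l IH]; simpl; [reflexivity|]. rewrite length_map, length_seq, IH. reflexivity. Qed.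

Lemma list_sum_seq a k : 2 * list_sum (seq a k) = k * (2 * a + k - 1).
Proof. revert a. induction k as [|k IH]; intros a; simpl; [reflexivity|]. specialize (IH (S a)). nia. Qed.

Definition hard_sample (O : op -> Prop) (M : nat) (P N : list lasso) : Prop :=
  Forall valid_lasso (P ++ N) /\ distinct_words (P ++ N) /\
  sample_size (P ++ N) = 2 + list_sum (moduli M) /\
  (exists f, in_frag O f /\ separates P N f) /\
  (forall f, in_frag O f -> separates P N f -> CentralBinomial.central_binomial M <= sz f).

Lemma moduli_ge2 M q : In q (moduli M) -> 2 <= q.
Proof. unfold moduli. rewrite in_seq. lia. Qed.

Lemma hard_sample_tick_words O M a : 1 <= M -> O OX -> O (OAtom a) ->
  ~ O OOr -> ~ O ONot -> ~ O OU ->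
  hard_sample O M (map tick_word (moduli M)) [cotick_word 2].
Proof.
  intros HM HX Ha HOr HNot HU.
  assert (H2 : In 2 (moduli M)) by (apply in_moduli; lia).
  split; [|split; [|split; [|split]]].
  - apply Forall_forall. intros w Hw. apply in_app_or in Hw.
    destruct Hw as [Hw|[<-|[]]]; [apply in_map_iff in Hw; destruct Hw as [q [<- Hq]];
      pose proof (moduli_ge2 M q Hq)|]; apply valid_periodic; lia.
  - apply distinct_words_app.
    + apply distinct_words_map_seq. intros i j Hi Hj. apply tick_word_neq. lia.
    + repeat constructor.
    + intros w1 w2 Hw1 [<-|[]]. apply in_map_iff in Hw1. destruct Hw1 as [q [<- Hq]].
      apply tick_cotick_word_neq; [apply (moduli_ge2 M q Hq) | lia].
  - rewrite sample_size_app. simpl (sample_size [_]).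
    rewrite (sample_size_map_periodic (fun q i => i =? q - 1)). lia.
  - exists (separator M a). split; [apply in_frag_nexts; auto|]. split.
    + apply Forall_forall. intros w Hw. apply in_map_iff in Hw. destruct Hw as [q [<- Hq]].
      apply in_moduli in Hq; [|lia].
      apply models_tick_word, holds_separator, tick_fact_pred; lia.
    + constructor; [|constructor].
      rewrite models_cotick_word, holds_separator, tick_fact_pred by lia. discriminate.
  - intros f Hf [HP HN]. eapply Nat.le_trans; [|apply ht_le_sz].
    apply (central_binomial_le_ht O); auto.
    + intros q Hq. rewrite Forall_forall in HP.
      apply models_tick_word; [pose proof (moduli_ge2 M q Hq); lia|].
      apply HP, in_map, Hq.
    + rewrite <- models_cotick_word by lia. inversion HN. assumption.
Qed.

Lemma hard_sample_cotick_words O M a : 1 <= M -> O OX -> O (OAtom a) ->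
  ~ O OAnd -> ~ O ONot -> ~ O OU ->
  hard_sample O M [tick_word 2] (map cotick_word (moduli M)).
Proof.
  intros HM HX Ha HAnd HNot HU.
  assert (H2 : In 2 (moduli M)) by (apply in_moduli; lia).
  split; [|split; [|split; [|split]]].
  - apply Forall_forall. intros w Hw.
    destruct Hw as [<-|Hw]; [|apply in_map_iff in Hw; destruct Hw as [q [<- Hq]];
      pose proof (moduli_ge2 M q Hq)]; apply valid_periodic; lia.
  - apply distinct_words_app.
    + repeat constructor.
    + apply distinct_words_map_seq. intros i j Hi Hj. apply cotick_word_neq. lia.
    + intros w1 w2 [<-|[]] Hw2. apply in_map_iff in Hw2. destruct Hw2 as [q [<- Hq]].
      apply tick_cotick_word_neq; [lia | apply (moduli_ge2 M q Hq)].
  - rewrite sample_size_app. simpl (sample_size [_]).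
    rewrite (sample_size_map_periodic (fun q i => negb (i =? q - 1))). lia.
  - exists (separator M a). split; [apply in_frag_nexts; auto|]. split.
    + constructor; [|constructor].
      apply models_tick_word, holds_separator, tick_fact_pred; lia.
    + apply Forall_forall. intros w Hw. apply in_map_iff in Hw. destruct Hw as [q [<- Hq]].
      apply in_moduli in Hq; [|lia].
      rewrite models_cotick_word, holds_separator, tick_fact_pred by lia. discriminate.
  - intros f Hf [HP HN]. eapply Nat.le_trans; [|apply ht_le_sz]. rewrite <- ht_dual.
    apply (central_binomial_le_ht (fun o => O (dual_op o))); auto using in_frag_dual.
    + intros q Hq. pose proof (moduli_ge2 M q Hq). rewrite Forall_forall in HN.
      apply NNPP. rewrite <- (holds_dual O (tick q) (fun j => negb (tick q j))); auto.
      rewrite <- models_cotick_word by lia. apply HN, in_map, Hq.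
    + rewrite <- (holds_dual O (fun j => negb (tick 2 j)) (tick 2)); auto.
      * inversion HP. apply models_tick_word; [lia | assumption].
      * intros i. symmetry. apply Bool.negb_involutive.
Qed.

Lemma moduli_sample_size_bounds j : 3 <= j ->
  j <= 2 + list_sum (moduli (2 * j)) <= (3 * j) * (3 * j).
Proof.
  intros Hj. unfold moduli. pose proof (list_sum_seq 2 (2 * (2 * j) - 1)) as E.
  replace (2 * (2 * j) - 1) with (4 * j - 1) in * by lia. nia.
Qed.

Lemma pow2_gt_linear j : 5 <= j -> 4 * j + 1 < 2 ^ j.
Proof.
  induction 1 as [|j Hj IH]; [simpl; lia|].
  rewrite Nat.pow_succ_r'. lia.
Qed.

Lemma central_binomial_exp_bound j : 5 <= j ->
  2 ^ (3 * j) < CentralBinomial.central_binomial (2 * j).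
Proof.
  intros Hj.
  assert (Hlow : 2 ^ (3 * j) * 2 ^ j <= (2 * (2 * j) + 1) * CentralBinomial.central_binomial (2 * j)).
  { rewrite <- Nat.pow_add_r. replace (3 * j + j) with (2 * (2 * j)) by lia.
    rewrite Nat.pow_mul_r. exact (CentralBinomial.pow4_le_central_binomial (2 * j)). }
  pose proof (pow2_gt_linear j Hj) as Hlin.
  pose proof (Nat.pow_nonzero 2 (3 * j) ltac:(lia)).
  nia.
Qed.

Lemma Rpower_sqrt_lt k m s : k <= m * m -> 2 ^ m < s -> (Rpower 2 (sqrt (INR k)) < INR s)%R.
Proof.
  intros Hk Hs. apply Rle_lt_trans with (Rpower 2 (INR m)).
  - apply Rle_Rpower; [lra|]. rewrite <- (sqrt_pow2 (INR m)) by apply pos_INR.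
    apply sqrt_le_1_alt. rewrite <- pow_INR. apply le_INR. simpl. lia.
  - rewrite Rpower_pow by lra. change 2%R with (INR 2). rewrite <- pow_INR. apply lt_INR, Hs.
Qed.

Theorem proposition4 :
  forall O : op -> Prop,
    monotone O -> O OX -> ~ O OU -> (exists q, O (OAtom q)) ->
    forall n : nat,
      exists P N : list lasso,
        Forall valid_lasso (P ++ N) /\
        distinct_words (P ++ N) /\
        n <= sample_size (P ++ N) /\
        (exists f, in_frag O f /\ separates P N f) /\
        (forall f, in_frag O f -> separates P N f ->
           (Rpower 2 (sqrt (INR (sample_size (P ++ N)))) < INR (sz f))%R).
Proof.
  intros O [HNot HOrAnd] HX HU [a Ha] n.
  set (j := n + 5).
  assert (Hhard : exists P N, hard_sample O (2 * j) P N).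
  { destruct (classic (O OOr)) as [HOr|HOr].
    - exists [tick_word 2], (map cotick_word (moduli (2 * j))).
      apply (hard_sample_cotick_words O (2 * j) a); auto; lia.
    - exists (map tick_word (moduli (2 * j))), [cotick_word 2].
      apply (hard_sample_tick_words O (2 * j) a); auto; lia. }
  destruct Hhard as [P [N [Hvalid [Hdistinct [Hsize [Hsep Hlower]]]]]].
  pose proof (moduli_sample_size_bounds j) as Hbounds.
  exists P, N. rewrite Hsize. repeat split; auto.
  - lia.
  - intros f Hf Hfsep. apply (Rpower_sqrt_lt _ (3 * j)); [lia|].
    apply Nat.lt_le_trans with (CentralBinomial.central_binomial (2 * j)).
    + apply central_binomial_exp_bound. lia.
    + apply Hlower; assumption.
Qed.
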